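(* Let $n$ and $k$ be nonnegative integers with $k\le n$. Then $$\sum_{m=k}^{n}\binom{n}{m}\binom{m+2k}{3k}(-1)^{m-k}=(-1)^{n-k}\binom{2k}{n-k}.$$
   Context: Binomial coefficients $\binom{a}{b}$ for nonnegative integers $a,b$ are the usual ones, with $\binom{a}{b}=0$ when $b>a$. *)

From mathcomp Require Import all_boot all_order all_algebra.

(* Vandermonde's convolution  C(m + l, k) = sum_j C(m, j) C(l, k - j)  reduces the
   sum to the alternating sums  sum_m (-1)^m C(n, m) C(m, j).  Since
   C(n, m) C(m, j) = C(n, j) C(n - j, m - j),  these are (-1)^j C(n, j) times the
   alternating sum of row n - j of Pascal's triangle, so they vanish unless j = n.
   Only j = n survives, leaving (-1)^n C(2k, 3k - n) = (-1)^n C(2k, n - k). *)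

From mathcomp Require Import all_boot all_order all_algebra.
From mathcomp Require Import zify ring.
Import GRing.Theory.
Local Open Scope ring_scope.

Lemma mul_bin_bin (n m i : nat) : (i <= m)%N ->
  ('C(n, m) * 'C(m, i) = 'C(n, i) * 'C(n - i, m - i))%N.
Proof.
move=> le_im; have [le_mn | lt_nm] := leqP m n; last first.
  rewrite (bin_small lt_nm); have [le_in | lt_ni] := leqP i n.
    by rewrite (@bin_small (n - i)) ?muln0 //; lia.
  by rewrite (bin_small lt_ni).
have facts_gt0 : (0 < i`! * (m - i)`! * (n - m)`!)%N by rewrite !muln_gt0 !fact_gt0.
apply/eqP; rewrite -(eqn_pmul2r facts_gt0); apply/eqP.
have -> : ('C(n, m) * 'C(m, i) * (i`! * (m - i)`! * (n - m)`!) = n`!)%N.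
  by rewrite -(bin_fact le_mn) -(bin_fact le_im); ring.
have le_mi_ni : (m - i <= n - i)%N by lia.
have sub_mi_ni : (n - i - (m - i) = n - m)%N by lia.
by rewrite -(bin_fact (leq_trans le_im le_mn)) -(bin_fact le_mi_ni) sub_mi_ni; ring.
Qed.

Lemma sum_sign_bin (R : pzRingType) (N : nat) :
  \sum_(j < N.+1) (-1) ^+ j *+ 'C(N, j) = (N == 0)%:R :> R.
Proof. by rewrite -exprD1n addNr expr0n. Qed.

Lemma sum_sign_bin_bin (R : pzRingType) (n i : nat) :
  \sum_(0 <= m < n.+1) (-1) ^+ m *+ ('C(n, m) * 'C(m, i)) = (-1) ^+ n *+ (i == n) :> R.
Proof.
have [le_in | lt_ni] := leqP i n; last first.
  rewrite gtn_eqF // big1_seq // => m /andP[_].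
  rewrite mem_index_iota => /andP[_ lt_mn].
  by rewrite (@bin_small m) ?muln0 ?mulr0n // (leq_trans lt_mn).
rewrite (big_cat_nat (leq0n i) (leqW le_in)) /= big1_seq ?add0r; last first.
  move=> m /andP[_]; rewrite mem_index_iota => /andP[_ lt_mi].
  by rewrite (@bin_small m) ?muln0 ?mulr0n.
rewrite (big_addn 0 n.+1 i) subSn // big_mkord.
under eq_bigr => j _ do rewrite mul_bin_bin ?leq_addl // addnK addnC exprD
  mulnC mulrnA -mulrnAr -mulrnAl.
rewrite -big_distrr /= sum_sign_bin.
have [-> | ne_in] := eqVneq i n; first by rewrite subnn binn mulr1.
by rewrite subn_eq0 leqNgt ltn_neqAle ne_in le_in mulr0.
Qed.

Lemma sum_sign_bin_binD (R : pzRingType) (n k l : nat) :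
  \sum_(0 <= m < n.+1) (-1) ^+ m *+ ('C(n, m) * 'C(m + l, k)) =
  (if (n <= k)%N then (-1) ^+ n *+ 'C(l, k - n) else 0) :> R.
Proof.
under eq_bigr => m _ do rewrite -binomial.Vandermonde big_distrr -sumrMnr.
rewrite exchange_big /=.
under eq_bigr => j _ do (under eq_bigr => m _ do rewrite mulnA mulrnA;
  rewrite sumrMnl sum_sign_bin_bin mulrnAC mulrb).
by rewrite -big_mkcond (big_ord1_eq _ (fun j => (-1) ^+ n *+ 'C(l, k - j))).
Qed.

Lemma signrB (R : pzRingType) (m n : nat) :
  (n <= m)%N -> (-1) ^+ (m - n) = (-1) ^+ m * (-1) ^+ n :> R.
Proof. by move=> le_nm; rewrite -signr_odd oddB // signr_addb !signr_odd. Qed.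

Theorem lemma4p1 (n k : nat) (hk : (k <= n)%N) :
  \sum_(k <= m < n.+1) (('C(n, m) * 'C(m + 2 * k, 3 * k))%:R * (-1) ^+ (m - k) : int)
  = (-1) ^+ (n - k) * ('C(2 * k, n - k))%:R.
Proof.
pose F m : int := (-1) ^+ m *+ ('C(n, m) * 'C(m + 2 * k, 3 * k)).
have low_terms_vanish : \sum_(0 <= m < k) F m = 0.
  apply: big1_seq => m /andP[_]; rewrite mem_index_iota /F => /andP[_ lt_mk].
  by rewrite (@bin_small (m + 2 * k)) ?muln0 ?mulr0n //; lia.
have sum_from_k : \sum_(k <= m < n.+1) F m = \sum_(0 <= m < n.+1) F m.
  by rewrite (big_cat_nat (leq0n k) (leqW hk)) /= low_terms_vanish add0r.
rewrite (eq_big_nat _ _ (F2 := fun m => (-1) ^+ k * F m)); last first.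
  by move=> m /andP[le_km _]; rewrite mulr_natl signrB // mulrC mulrnAr.
rewrite -big_distrr /= sum_from_k sum_sign_bin_binD mulr_natr signrB //.
case: leqP => [le_n3k | lt_3kn]; last by rewrite bin_small ?mulr0 //; lia.
have -> : (3 * k - n = 2 * k - (n - k))%N by lia.
rewrite bin_sub; last by lia.
by rewrite mulrnAr mulrC.
Qed.
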